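(* Let $S$ be a finite set and let $\Pi(S)$ be the lattice of partitions of $S$ ordered by refinement. For indeterminates $q_1,q_2$ define the matrix $\mu_{q_1,q_2}$ on $\Pi(S)\times\Pi(S)$ by \[ \mu_{q_1,q_2}(\sigma,\pi)=\begin{cases}\prod_{i=1}^k\prod_{j=1}^{\lambda_i-1}(q_2-jq_1) & \text{if }\sigma\le\pi=\{B_1,\dots,B_k\}\text{ and }B_i\text{ is partitioned into }\lambda_i\text{ blocks in }\sigma,\\ 0&\text{if }\sigma\not\le\pi.\end{cases} \] Then, as an identity of matrices with entries in $\mathbb{Z}[q_1,q_2,q_3]$, \[ \mu_{q_1,q_2}\,\mu_{q_2,q_3}=\mu_{q_1,q_3} \] (matrix multiplication).
   Context: $\sigma\le\pi$ means that $\sigma$ refines $\pi$ (every block of $\sigma$ is contained in a block of $\pi$). Matrix multiplication is $(M N)(\sigma,\pi)=\sum_{\tau\in\Pi(S)}M(\sigma,\tau)N(\tau,\pi)$. *)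

From HB Require Import structures.
From mathcomp Require Import all_boot all_order all_algebra.
Set Implicit Arguments. Unset Strict Implicit. Unset Printing Implicit Defensive.
Import GRing.Theory.
Local Open Scope ring_scope.

Definition is_partition (T : finType) (P : {set {set T}}) : bool :=
  partition P [set: T].

Definition refines (T : finType) (sigma pi : {set {set T}}) : bool :=
  [forall B in sigma, exists C in pi, B \subset C].

Definition nblocks_in (T : finType) (sigma : {set {set T}}) (B : {set T}) : nat :=
  #|[set C in sigma | C \subset B]|.

Definition mu (R : comRingType) (T : finType) (q1 q2 : R)
    (sigma pi : {set {set T}}) : R :=
  if refines sigma pi then
    \prod_(B in pi) \prod_(1 <= j < nblocks_in sigma B) (q2 - j%:R * q1)
  else 0.

From HB Require Import structures.
From mathcomp Require Import all_boot all_order all_algebra.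
Set Implicit Arguments. Unset Strict Implicit. Unset Printing Implicit Defensive.
Import GRing.Theory.

(* Induction on the number of blocks of sigma, for partitions of an arbitrary
   set D. Fix a block X of sigma and the block Y of pi containing it, and delete
   X from every block (dropping empty blocks): this maps the partitions tau with
   sigma <= tau <= pi onto those between the reduced sigma' and pi', which
   partition D minus X. The fiber over such a rho consists of rho with X added
   as a new block, and of rho with X merged into one of its k blocks C inside Y.
   Relative to the weights of (sigma', rho, pi'), the new block contributes the
   factor (q3 - k q2) and the merge into C the factor (q2 - n_C q1), n_C being
   the number of blocks of sigma' inside C. They add up to q3 - n q1 with
   n = sum n_C, the number of blocks of sigma' inside Y, which is the extra factor
   of mu_{q1,q3}(sigma, pi) over mu_{q1,q3}(sigma', pi'). *)

Section Partitions.
Variable T : finType.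
Implicit Types (x : T) (A B C D E X : {set T}) (P Q : {set {set T}}).

Lemma trivIset_mem_eq P A B x :
  trivIset P -> A \in P -> B \in P -> x \in A -> x \in B -> A = B.
Proof. by move=> tP AP BP xA xB; rewrite -(def_pblock tP AP xA) (def_pblock tP BP xB). Qed.

Lemma trivIset_subset_eq P A E :
  trivIset P -> A \in P -> E \in P -> A != set0 -> A \subset E -> A = E.
Proof.
move=> tP AP EP /set0Pn[x xA] AE.
exact: trivIset_mem_eq tP AP EP xA (subsetP AE x xA).
Qed.

Lemma block_neq0 P B : set0 \notin P -> B \in P -> B != set0.
Proof. by move=> nP BP; apply: contraNneq nP => <-. Qed.

Lemma disjoint_setDl A B : [disjoint A :\: B & B].
Proof. by rewrite -setI_eq0 setDE -setIA [~: B :&: B]setIC setICr setI0. Qed.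

Lemma setDUK A B : A \subset B -> A :|: B :\: A = B.
Proof. by move=> AB; rewrite -{1}(setIidPr AB) setID. Qed.

Lemma set1D1_set0 A : [set A] :\ set0 = if A == set0 then set0 else [set A].
Proof.
case: (eqVneq A set0) => [->|nA0]; apply/setP => C; rewrite !inE; first exact: andNb.
by case: (eqVneq C A) => [->|]; rewrite ?nA0 ?andbF.
Qed.

Lemma refinesP P Q :
  reflect (forall B, B \in P -> exists2 C, C \in Q & B \subset C) (refines P Q).
Proof.
apply: (iffP forall_inP) => H B /H; first by move/exists_inP.
by move=> ?; apply/exists_inP.
Qed.

Lemma refines_block P Q B : refines P Q -> B \in P -> exists2 C, C \in Q & B \subset C.
Proof. by move/refinesP; apply. Qed.

Lemma refines_trans P Q S : refines P Q -> refines Q S -> refines P S.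
Proof.
move=> /refinesP h1 /refinesP h2; apply/refinesP => B /h1 [C /h2 [E ES CE] BC].
by exists E => //; apply: subset_trans CE.
Qed.

Lemma partition_set0 P : partition P set0 = (P == set0).
Proof.
apply/idP/eqP => [/and3P[/eqP cP _ nP] | ->]; last first.
  by rewrite /partition /cover big_set0 eqxx inE andbT /=; apply/trivIsetP => A B; rewrite inE.
apply/setP => B; rewrite inE; apply/negbTE/negP => BP.
have : B \subset cover P by apply: bigcup_sup.
by rewrite cP subset0 => /eqP B0; rewrite -B0 BP in nP.
Qed.

Lemma partition_setU1 P D E : partition P D -> E != set0 -> [disjoint E & D] ->
  partition (E |: P) (E :|: D).
Proof.
case/and3P => /eqP cP tP nP En0 dED.
have EP : E \notin P.
  apply/negP => EP; case/set0Pn: En0 => x xE.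
  have : x \in D by rewrite -cP; apply/bigcupP; exists E.
  by rewrite (disjointFr dED xE).
apply/and3P; split.
- by rewrite /cover big_setU1 //= -/(cover P) cP.
- by apply: trivIsetU; [exact: trivIset1 | exact: tP | rewrite cover1 cP].
- by rewrite !inE negb_or eq_sym En0.
Qed.

Lemma partition_setD1 P D B : partition P D -> B \in P -> partition (P :\ B) (D :\: B).
Proof.
case/and3P => /eqP cP tP nP BP; apply/and3P; split.
- by rewrite coverD1 // cP.
- exact: trivIsetS (subD1set _ _) tP.
- by rewrite !inE negb_and nP orbT.
Qed.

Definition blocksD P X := [set B :\: X | B in P] :\ set0.

Lemma blocksDP X P C :
  reflect (C != set0 /\ exists2 B, B \in P & C = B :\: X) (C \in blocksD P X).
Proof.
rewrite !inE; apply: (iffP andP) => [[h /imsetP[B BP eC]]|[h [B BP eC]]].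
  by split => //; exists B.
by split => //; apply/imsetP; exists B.
Qed.

Lemma partition_blocksD X P D : partition P D -> partition (blocksD P X) (D :\: X).
Proof.
case/and3P => /eqP cP tP nP; apply/and3P; split.
- apply/eqP/setP => x; rewrite -cP inE; apply/bigcupP/andP.
    case=> C /blocksDP [_ [B BP ->]]; rewrite inE => /andP[xX xB].
    by split => //; apply/bigcupP; exists B.
  case=> xX /bigcupP [B BP xB]; exists (B :\: X); last by rewrite inE xX.
  apply/blocksDP; split; last by exists B.
  by apply/set0Pn; exists x; rewrite inE xX.
- apply/trivIsetP => C1 C2 /blocksDP[_ [B1 B1P ->]] /blocksDP[_ [B2 B2P ->]] ne.
  have ne' : B1 != B2 by apply: contraNneq ne => ->.
  by apply: disjointW (trivIsetP tP _ _ B1P B2P ne'); apply: subsetDl.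
- by rewrite !inE eqxx.
Qed.

Lemma refines_blocksD X P Q : refines P Q -> refines (blocksD P X) (blocksD Q X).
Proof.
move/refinesP => PQ; apply/refinesP => C /blocksDP [n0 [B BP eC]]; subst C.
case: (PQ B BP) => E EQ BE; exists (E :\: X); last exact: setSD.
apply/blocksDP; split; last by exists E.
by apply: contraNneq n0; rewrite -!subset0 => <-; apply: setSD.
Qed.

Lemma blocksD_eq X P E : trivIset P -> set0 \notin P -> E \in P -> X \subset E ->
  blocksD P X = (P :\ E) :|: ([set E :\: X] :\ set0).
Proof.
move=> tP nP EP XE.
have BDX B : B \in P -> B != E -> B :\: X = B.
  move=> BP nBE; apply/setDidPl.
  exact: disjointWr XE (trivIsetP tP _ _ BP EP nBE).
apply/setP => C; apply/blocksDP/idP.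
  case=> n0 [B BP eC]; subst C; rewrite !inE.
  case: (eqVneq B E) => [eBE|nBE]; first by subst B; rewrite eqxx n0 /= orbT.
  by rewrite BDX // nBE BP.
rewrite !inE => /orP [/andP[nCE CP]|/andP[n0 /eqP eC]]; last by subst C; split=> //; exists E.
by split; [exact: block_neq0 nP CP | exists C; rewrite ?BDX].
Qed.

Lemma blocksD_block X P : trivIset P -> set0 \notin P -> X \in P ->
  blocksD P X = P :\ X.
Proof.
by move=> tP nP XP; rewrite (blocksD_eq tP nP XP) // setDv set1D1_set0 eqxx setU0.
Qed.

End Partitions.

Section BlockCounts.
Variable T : finType.
Implicit Types (A C E X : {set T}) (Q : {set {set T}}).

Lemma nblocks_in_setU1 Q E A :
  E \notin Q -> E \subset A -> nblocks_in (E |: Q) A = (nblocks_in Q A).+1.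
Proof.
move=> EQ EA; rewrite /nblocks_in.
have -> : [set C in E |: Q | C \subset A] = E |: [set C in Q | C \subset A].
  by apply/setP => C; rewrite !inE; case: (eqVneq C E) => [->|].
by rewrite cardsU1 inE (negbTE EQ).
Qed.

Lemma nblocks_in_setU1_out Q E A :
  ~~ (E \subset A) -> nblocks_in (E |: Q) A = nblocks_in Q A.
Proof.
move=> EA; apply: eq_card => C; rewrite !inE.
by case: (eqVneq C E) => [->|] //=; rewrite (negbTE EA) andbF.
Qed.

Lemma nblocks_in_setD1 Q C A :
  C \in Q -> C \subset A -> nblocks_in Q A = (nblocks_in (Q :\ C) A).+1.
Proof.
move=> CQ CA; rewrite /nblocks_in (cardsD1 C) inE CQ CA /=; congr (_ + _).
by apply: eq_card => E; rewrite !inE andbA.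
Qed.

Lemma nblocks_in_setD1_out Q C A :
  ~~ (C \subset A) -> nblocks_in (Q :\ C) A = nblocks_in Q A.
Proof.
move=> CA; apply: eq_card => E; rewrite !inE.
by case: (eqVneq E C) => [->|] //=; rewrite (negbTE CA) andbF.
Qed.

Lemma nblocks_in_setU_disjoint Q A X : (forall C, C \in Q -> [disjoint C & X]) ->
  nblocks_in Q (A :|: X) = nblocks_in Q A.
Proof.
move=> dQ; apply: eq_card => C; rewrite !inE.
case CQ: (C \in Q) => //=.
by rewrite setUC -subDset (setDidPl (dQ C CQ)).
Qed.

Lemma nblocks_in_set0 Q : set0 \notin Q -> nblocks_in Q set0 = 0.
Proof.
move=> nQ; apply/eqP; rewrite cards_eq0; apply/eqP/setP => C; rewrite !inE subset0.
by case: (eqVneq C set0) => [->|]; rewrite ?(negbTE nQ) ?andbF.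
Qed.

Lemma nblocks_in_sum Q A : nblocks_in Q A = (\sum_(C in Q) (C \subset A))%N.
Proof.
rewrite /nblocks_in -sum1_card [LHS]big_mkcond [RHS]big_mkcond; apply: eq_bigr => C _.
by rewrite inE; case: (C \in Q); case: (C \subset A).
Qed.

End BlockCounts.

Section Weights.
Variable R : comRingType.
Local Open Scope ring_scope.
Implicit Types (a b c : R) (m : nat).

Definition mu_factor a b m : R := \prod_(1 <= j < m) (b - j%:R * a).

(* The factor gained by [mu_factor a b] from [m] to [m.+1]; it is [1], not [b], at [m = 0]. *)
Definition mu_step a b m : R := if m == 0%N then 1 else b - m%:R * a.

Definition mu_weight (T : finType) a b (sigma pi : {set {set T}}) : R :=
  \prod_(B in pi) mu_factor a b (nblocks_in sigma B).

Lemma mu_factor0 a b : mu_factor a b 0 = 1.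
Proof. by rewrite /mu_factor big_geq. Qed.

Lemma mu_factor1 a b : mu_factor a b 1 = 1.
Proof. by rewrite /mu_factor big_geq. Qed.

Lemma mu_factorS a b m : mu_factor a b m.+1 = mu_factor a b m * mu_step a b m.
Proof.
case: m => [|m]; first by rewrite mu_factor1 mu_factor0 /mu_step mulr1.
by rewrite /mu_factor big_nat_recr.
Qed.

Lemma muE (T : finType) a b (sigma pi : {set {set T}}) :
  mu a b sigma pi = if refines sigma pi then mu_weight a b sigma pi else 0.
Proof. by []. Qed.

Lemma sum_mu_step (I : finType) (A : {set I}) (n : I -> nat) a b c :
  (forall i, i \in A -> 0 < n i)%N ->
  \sum_(i in A) mu_step a b (n i) + mu_step b c #|A| = mu_step a c (\sum_(i in A) n i).
Proof.
move=> n_gt0; case: (set_0Vmem A) => [->|[i0 i0A]].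
  by rewrite !big_set0 cards0 /mu_step eqxx add0r.
have A_gt0 : (0 < #|A|)%N by rewrite card_gt0; apply/set0Pn; exists i0.
have sum_gt0 : (0 < \sum_(i in A) n i)%N by rewrite (bigD1 i0) //= ltn_addr // n_gt0.
rewrite (eq_bigr (fun i => b - (n i)%:R * a)); last first.
  by move=> i iA; rewrite /mu_step eqn0Ngt n_gt0.
rewrite sumrB sumr_const -mulr_suml -natr_sum /mu_step !eqn0Ngt A_gt0 sum_gt0 /=.
by rewrite [#|A|%:R * b]mulr_natl addrAC addrCA subrr addr0.
Qed.

Lemma mu_mul_sum_interval (T : finType) a b c (D : {set T}) (sigma pi : {set {set T}}) :
  \sum_(tau | partition tau D) mu a b sigma tau * mu b c tau pi =
  \sum_(tau | partition tau D && (refines sigma tau && refines tau pi))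
    mu_weight a b sigma tau * mu_weight b c tau pi.
Proof.
rewrite (bigID (fun tau => refines sigma tau && refines tau pi)) /=.
rewrite [X in _ + X]big1 ?addr0 => [|tau /andP[_]].
  by apply: eq_bigr => tau /andP[_ /andP[st tp]]; rewrite !muE st tp.
by rewrite !muE; case: (refines sigma tau); case: (refines tau pi); rewrite ?mul0r ?mulr0.
Qed.

End Weights.

Section InductionStep.
Variable T : finType.
Implicit Types (x : T) (A B C E : {set T}) (P Q : {set {set T}}).
Variables (D X Y : {set T}) (sigma pi : {set {set T}}).
Hypotheses (p_sigma : partition sigma D) (p_pi : partition pi D).
Hypotheses (X_sigma : X \in sigma) (Y_pi : Y \in pi) (XY : X \subset Y).

Variable R : comRingType.
Implicit Types (a b c : R).

Local Open Scope ring_scope.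
Local Notation sigma' := (blocksD sigma X).
Local Notation pi' := (blocksD pi X).
Local Notation Z := (Y :\: X).

Let t_sigma : trivIset sigma. Proof. by case/and3P: p_sigma. Qed.
Let n_sigma : set0 \notin sigma. Proof. by case/and3P: p_sigma. Qed.
Let t_pi : trivIset pi. Proof. by case/and3P: p_pi. Qed.
Let n_pi : set0 \notin pi. Proof. by case/and3P: p_pi. Qed.

Lemma X_neq0 : X != set0.
Proof. exact: block_neq0 n_sigma X_sigma. Qed.

Lemma X_subset_D : X \subset D.
Proof. by case/and3P: p_sigma => /eqP <- _ _; apply: bigcup_sup. Qed.

Lemma sigma'E : sigma' = sigma :\ X.
Proof. exact: blocksD_block. Qed.

Lemma sigmaE : sigma = X |: sigma'.
Proof. by rewrite sigma'E setD1K. Qed.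

Lemma X_notin_sigma' : X \notin sigma'.
Proof. by rewrite sigma'E !inE eqxx. Qed.

Lemma set0_notin_sigma' : set0 \notin sigma'.
Proof. by rewrite sigma'E !inE negb_and n_sigma orbT. Qed.

Lemma sigma'_disjoint B : B \in sigma' -> [disjoint B & X].
Proof. by rewrite sigma'E !inE => /andP[nBX BS]; apply: (trivIsetP t_sigma). Qed.

Lemma YE : Y = Z :|: X.
Proof. by rewrite setUC setDUK. Qed.

Lemma not_subset_other_block E B :
  B \in pi :\ Y -> E != set0 -> E \subset Y -> ~~ (E \subset B).
Proof.
rewrite !inE => /andP[nBY BP]; apply: subsetC_disjoint.
by apply: (trivIsetP t_pi); rewrite // eq_sym.
Qed.

Lemma prod_blocksD_pi (g : {set T} -> R) : g set0 = 1 ->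
  \prod_(B in pi') g B = g Z * \prod_(B in pi :\ Y) g B.
Proof.
move=> g0; rewrite (blocksD_eq t_pi n_pi Y_pi XY) set1D1_set0.
case: (eqVneq Z set0) => [->|Zn0]; first by rewrite g0 mul1r setU0.
have Z_notin : Z \notin pi :\ Y.
  rewrite !inE negb_and; case: (eqVneq Z Y) => //= nZY.
  by apply: contra nZY => Z_pi; rewrite (trivIset_subset_eq t_pi Z_pi Y_pi) ?subsetDl.
by rewrite setUC big_setU1.
Qed.

(* Adding X as a block shifts by one the count of blocks inside Y, and no other count. *)
Lemma mu_weight_setU1 a b Q :
  X \notin Q -> set0 \notin Q -> (forall C, C \in Q -> [disjoint C & X]) ->
  mu_weight a b (X |: Q) pi = mu_weight a b Q pi' * mu_step a b (nblocks_in Q Z).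
Proof.
move=> XQ nQ dQ; rewrite /mu_weight (big_setD1 _ Y_pi) prod_blocksD_pi; last first.
  by rewrite nblocks_in_set0 // mu_factor0.
rewrite nblocks_in_setU1 // {1}YE nblocks_in_setU_disjoint // mu_factorS mulrAC.
congr (_ * _ * _); apply: eq_bigr => B BP.
by rewrite nblocks_in_setU1_out // (not_subset_other_block BP X_neq0 XY).
Qed.

Lemma mu_weight_sigma_pi a b :
  mu_weight a b sigma pi = mu_weight a b sigma' pi' * mu_step a b (nblocks_in sigma' Z).
Proof.
rewrite {1}sigmaE mu_weight_setU1 //.
- exact: X_notin_sigma'.
- exact: set0_notin_sigma'.
- exact: sigma'_disjoint.
Qed.

Section Fiber.
Variable rho : {set {set T}}.
Hypotheses (p_rho : partition rho (D :\: X)).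
Hypotheses (sigma'_rho : refines sigma' rho) (rho_pi' : refines rho pi').

Let t_rho : trivIset rho. Proof. by case/and3P: p_rho. Qed.
Let n_rho : set0 \notin rho. Proof. by case/and3P: p_rho. Qed.

Lemma rho_subset C : C \in rho -> C \subset D :\: X.
Proof. by case/and3P: p_rho => /eqP <- _ _; apply: bigcup_sup. Qed.

Lemma rho_disjoint C : C \in rho -> [disjoint C & X].
Proof.
move=> C_rho; exact: disjointWl (rho_subset C_rho) (disjoint_setDl D X).
Qed.

Lemma X_notin_rho : X \notin rho.
Proof.
apply/negP => X_rho; case/set0Pn: X_neq0 => x xX.
by move: (disjointFr (rho_disjoint X_rho) xX); rewrite xX.
Qed.

Lemma nblocks_in_sigma_rho C : C \in rho -> nblocks_in sigma C = nblocks_in sigma' C.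
Proof.
move=> C_rho; rewrite {1}sigmaE nblocks_in_setU1_out //.
by apply: subsetC_disjoint X_neq0 (subxx X); rewrite disjoint_sym rho_disjoint.
Qed.

Definition tau_new := X |: rho.
Definition tau_join C := (C :|: X) |: (rho :\ C).
Definition joinable := [set C in rho | C \subset Z].
Definition fiber := tau_new |: tau_join @: joinable.

Lemma partition_tau_new : partition tau_new D.
Proof.
rewrite -(setDUK X_subset_D); apply: partition_setU1 p_rho X_neq0 _.
by rewrite disjoint_sym disjoint_setDl.
Qed.

Lemma refines_sigma_tau_new : refines sigma tau_new.
Proof.
move/refinesP: sigma'_rho => h; apply/refinesP => B B_sigma.
case: (eqVneq B X) => [->|nBX]; first by exists X; rewrite ?setU11.
have : B \in sigma' by rewrite sigma'E !inE nBX.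
by case/h => C CP BC; exists C; rewrite // !inE CP orbT.
Qed.

Lemma refines_tau_new_pi : refines tau_new pi.
Proof.
move/refinesP: rho_pi' => h; apply/refinesP => B; rewrite !inE => /orP[/eqP->|BP].
  by exists Y.
case/h: BP => _ /blocksDP [_ [E EP ->]] BE; exists E => //.
exact: subset_trans BE (subsetDl _ _).
Qed.

Lemma blocksD_tau_new : blocksD tau_new X = rho.
Proof.
case/and3P: partition_tau_new => _ t0 n0.
by rewrite blocksD_block ?setU11 // setU1K ?X_notin_rho.
Qed.

Lemma mu_weight_sigma_tau_new a b :
  mu_weight a b sigma tau_new = mu_weight a b sigma' rho.
Proof.
rewrite /mu_weight big_setU1 ?X_notin_rho //=.
have -> : nblocks_in sigma X = 1%N.
  rewrite {1}sigmaE nblocks_in_setU1 ?X_notin_sigma' // -{2}(set0U X).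
  by rewrite nblocks_in_setU_disjoint ?nblocks_in_set0 ?set0_notin_sigma' //; exact: sigma'_disjoint.
by rewrite mu_factor1 mul1r; apply: eq_bigr => B /nblocks_in_sigma_rho ->.
Qed.

Lemma mu_weight_tau_new_pi a b :
  mu_weight a b tau_new pi = mu_weight a b rho pi' * mu_step a b (nblocks_in rho Z).
Proof. by apply: mu_weight_setU1; [exact: X_notin_rho | exact: n_rho | exact: rho_disjoint]. Qed.

Lemma setUX_neq0 C : C :|: X != set0.
Proof. by apply: contraNneq X_neq0; rewrite -!subset0 => <-; apply: subsetUr. Qed.

Lemma setUX_notin_rho C : C :|: X \notin rho.
Proof.
apply/negP => CX_rho; case/set0Pn: X_neq0 => x xX.
have xCX : x \in C :|: X by rewrite inE xX orbT.
by move: (disjointFr (rho_disjoint CX_rho) xCX); rewrite xX.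
Qed.

Lemma setUXK C : C \in rho -> (C :|: X) :\: X = C.
Proof. by move=> C_rho; rewrite setDUl setDv setU0; apply/setDidPl; apply: rho_disjoint. Qed.

Section Join.
Variable C : {set T}.
Hypotheses (C_rho : C \in rho) (CZ : C \subset Z).

Lemma setUX_notin_rho_setD1 : C :|: X \notin rho :\ C.
Proof. by rewrite !inE negb_and setUX_notin_rho orbT. Qed.

Lemma partition_tau_join : partition (tau_join C) D.
Proof.
have CX_D : C :|: X \subset D.
  by rewrite subUset X_subset_D (subset_trans (rho_subset C_rho)) ?subsetDl.
have DE : (C :|: X) :|: ((D :\: X) :\: C) = D.
  by rewrite setDDl [X :|: C]setUC setDUK.
rewrite -DE; apply: partition_setU1 (partition_setD1 p_rho C_rho) (setUX_neq0 C) _.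
rewrite -setI_eq0 setIUl setU_eq0 !setI_eq0 disjoint_sym disjoint_setDl /=.
by rewrite disjoint_sym (disjointWl (subsetDl _ _) (disjoint_setDl D X)).
Qed.

Lemma refines_sigma_tau_join : refines sigma (tau_join C).
Proof.
move/refinesP: sigma'_rho => h; apply/refinesP => B B_sigma.
case: (eqVneq B X) => [->|nBX]; first by exists (C :|: X); rewrite ?setU11 ?subsetUr.
have : B \in sigma' by rewrite sigma'E !inE nBX.
case/h => E E_rho BE; case: (eqVneq E C) => [eEC|nEC].
  by exists (C :|: X); rewrite ?setU11 // -eEC (subset_trans BE) ?subsetUl.
by exists E; rewrite // !inE nEC E_rho !orbT.
Qed.

Lemma refines_tau_join_pi : refines (tau_join C) pi.
Proof.
move/refinesP: rho_pi' => h; apply/refinesP => B.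
rewrite !inE => /orP[/eqP->|/andP[_ B_rho]].
  by exists Y; rewrite // subUset XY (subset_trans CZ) ?subsetDl.
case/h: B_rho => _ /blocksDP [_ [E EP ->]] BE; exists E => //.
exact: subset_trans BE (subsetDl _ _).
Qed.

Lemma blocksD_tau_join : blocksD (tau_join C) X = rho.
Proof.
case/and3P: partition_tau_join => _ t0 n0.
rewrite (blocksD_eq t0 n0 (setU11 _ _) (subsetUr _ _)) (setUXK C_rho) set1D1_set0.
rewrite (negbTE (block_neq0 n_rho C_rho)) setU1K ?setUX_notin_rho_setD1 //.
by rewrite setUC setD1K.
Qed.

Lemma mu_weight_sigma_tau_join a b :
  mu_weight a b sigma (tau_join C) =
  mu_weight a b sigma' rho * mu_step a b (nblocks_in sigma' C).
Proof.
rewrite /mu_weight big_setU1 ?setUX_notin_rho_setD1 //= (big_setD1 _ C_rho) /=.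
have -> : nblocks_in sigma (C :|: X) = (nblocks_in sigma' C).+1.
  rewrite {1}sigmaE nblocks_in_setU1 ?X_notin_sigma' ?subsetUr //.
  by rewrite nblocks_in_setU_disjoint //; exact: sigma'_disjoint.
rewrite mu_factorS mulrAC; congr (_ * _ * _); apply: eq_bigr => B.
by rewrite !inE => /andP[_ /nblocks_in_sigma_rho ->].
Qed.

Lemma mu_weight_tau_join_pi a b :
  mu_weight a b (tau_join C) pi = mu_weight a b rho pi'.
Proof.
have CY : C \subset Y by apply: subset_trans CZ (subsetDl _ _).
have CXY : C :|: X \subset Y by rewrite subUset CY XY.
rewrite /mu_weight (big_setD1 _ Y_pi) prod_blocksD_pi; last first.
  by rewrite nblocks_in_set0 ?n_rho // mu_factor0.
have -> : nblocks_in (tau_join C) Y = nblocks_in rho Z.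
  rewrite nblocks_in_setU1 ?setUX_notin_rho_setD1 // -(nblocks_in_setD1 C_rho CY) {1}YE.
  by rewrite nblocks_in_setU_disjoint //; exact: rho_disjoint.
congr (_ * _); apply: eq_bigr => B BP.
rewrite nblocks_in_setU1_out; last exact: not_subset_other_block BP (setUX_neq0 C) CXY.
by rewrite nblocks_in_setD1_out // (not_subset_other_block BP (block_neq0 n_rho C_rho) CY).
Qed.

End Join.

Lemma tau_new_notin_join : tau_new \notin tau_join @: joinable.
Proof.
apply/imsetP => -[C]; rewrite inE => /andP[C_rho _] tau_newE.
have : X \in tau_join C by rewrite -tau_newE setU11.
rewrite !inE (negbTE X_notin_rho) andbF orbF => /eqP XE.
case/set0Pn: (block_neq0 n_rho C_rho) => c cC.
by move: (disjointFr (rho_disjoint C_rho) cC); rewrite XE inE cC.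
Qed.

Lemma tau_join_inj : {in joinable &, injective tau_join}.
Proof.
move=> C1 C2; rewrite !inE => /andP[C1_rho _] /andP[C2_rho _] e.
have : C1 :|: X \in tau_join C2 by rewrite -e setU11.
rewrite !inE => /orP[/eqP h|/andP[_ h]]; first by rewrite -(setUXK C1_rho) h setUXK.
by move: (setUX_notin_rho C1); rewrite h.
Qed.

Lemma mem_fiber tau : partition tau D -> refines sigma tau -> refines tau pi ->
  blocksD tau X = rho -> tau \in fiber.
Proof.
move=> p_tau /refinesP s_tau /refinesP tau_pi rhoE.
case/and3P: (p_tau) => _ t_tau n_tau.
case: (s_tau X X_sigma) => E E_tau XE.
have EY : E \subset Y.
  case: (tau_pi E E_tau) => Y' Y'_pi EY'; case/set0Pn: X_neq0 => x xX.
  have xY' : x \in Y' by apply/(subsetP EY')/(subsetP XE).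
  by rewrite (trivIset_mem_eq t_pi Y_pi Y'_pi (subsetP XY x xX) xY').
move: rhoE; rewrite (blocksD_eq t_tau n_tau E_tau XE) set1D1_set0 !inE.
case: (eqVneq (E :\: X) set0) => [EX0|EXn0] rhoE.
  have EX : E = X by apply/eqP; rewrite eqEsubset XE andbT -setD_eq0 EX0.
  by rewrite /tau_new -rhoE setU0 -EX setD1K ?eqxx.
have EX_notin : E :\: X \notin tau :\ E.
  rewrite !inE negb_and; case: (eqVneq (E :\: X) E) => //= nEXE.
  by apply: contra nEXE => EX_tau; rewrite (trivIset_subset_eq t_tau EX_tau E_tau) ?subsetDl.
apply/orP; right; apply/imsetP; exists (E :\: X).
  by rewrite !inE -rhoE !inE eqxx orbT setSD.
by rewrite /tau_join [E :\: X :|: X]setUC setDUK // -rhoE [tau :\ E :|: _]setUC setU1K // setD1K.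
Qed.

Lemma in_fiber tau :
  (partition tau D && (refines sigma tau && refines tau pi)) && (blocksD tau X == rho)
  = (tau \in fiber).
Proof.
apply/idP/idP => [/andP[/and3P[p_tau s_tau tau_pi] /eqP]|]; first exact: mem_fiber.
rewrite !inE => /orP[/eqP->|/imsetP[C]].
  by rewrite partition_tau_new refines_sigma_tau_new refines_tau_new_pi blocksD_tau_new eqxx.
rewrite inE => /andP[C_rho CZ] ->.
by rewrite partition_tau_join // refines_sigma_tau_join // refines_tau_join_pi // blocksD_tau_join // eqxx.
Qed.

Lemma sigma'_block_eq B C E : B \in sigma' -> C \in rho -> E \in rho ->
  B \subset C -> B \subset E -> C = E.
Proof.
move=> B_s C_rho E_rho BC BE; case/set0Pn: (block_neq0 set0_notin_sigma' B_s) => x xB.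
exact: trivIset_mem_eq t_rho C_rho E_rho (subsetP BC x xB) (subsetP BE x xB).
Qed.

Lemma nblocks_in_rho_gt0 C : C \in rho -> (0 < nblocks_in sigma' C)%N.
Proof.
move=> C_rho; case/set0Pn: (block_neq0 n_rho C_rho) => c cC.
have : c \in cover sigma'.
  case/and3P: (partition_blocksD X p_sigma) => /eqP -> _ _.
  exact: subsetP (rho_subset C_rho) c cC.
case/bigcupP => B B_s cB; case: (refines_block sigma'_rho B_s) => E E_rho BE.
rewrite card_gt0; apply/set0Pn; exists B; rewrite inE B_s.
by rewrite (trivIset_mem_eq t_rho C_rho E_rho cC (subsetP BE c cB)).
Qed.

(* E lies inside a single block of pi. *)
Lemma subset_Z_rho B E : B \in sigma' -> E \in rho -> B \subset E ->
  (B \subset Z) = (E \subset Z).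
Proof.
move=> B_s E_rho BE; apply/idP/idP => [BZ|]; last exact: subset_trans.
case: (refines_block rho_pi' E_rho) => _ /blocksDP[_ [Y' Y'_pi ->]] EY'.
case/set0Pn: (block_neq0 set0_notin_sigma' B_s) => x xB.
have xY : x \in Y by move: (subsetP BZ x xB); rewrite inE => /andP[].
have xY' : x \in Y' by move: (subsetP EY' x (subsetP BE x xB)); rewrite inE => /andP[].
by rewrite (trivIset_mem_eq t_pi Y'_pi Y_pi xY' xY) in EY'.
Qed.

Lemma sum_joinable_subset B : B \in sigma' ->
  (\sum_(C in joinable) (B \subset C))%N = (B \subset Z).
Proof.
move=> B_s; case: (refines_block sigma'_rho B_s) => E E_rho BE.
rewrite (subset_Z_rho B_s E_rho BE).
have BC_E C : C \in joinable -> C != E -> (B \subset C) = false.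
  rewrite inE => /andP[C_rho _] nCE; apply: contraNF nCE => BC.
  by rewrite (sigma'_block_eq B_s C_rho E_rho BC BE).
case: (boolP (E \subset Z)) => EZ.
  rewrite (bigD1 E) ?inE ?E_rho ?EZ //= BE big1 // => C /andP[C_j nCE].
  by rewrite BC_E.
rewrite big1 // => C C_j; rewrite BC_E //; apply: contraNneq EZ => <-.
by move: C_j; rewrite inE => /andP[].
Qed.

Lemma nblocks_in_Z : nblocks_in sigma' Z = (\sum_(C in joinable) nblocks_in sigma' C)%N.
Proof.
rewrite nblocks_in_sum (eq_bigr (fun B => \sum_(C in joinable) (B \subset C))%N).
  by rewrite exchange_big; apply: eq_bigr => C _; rewrite nblocks_in_sum.
by move=> B /sum_joinable_subset.
Qed.

Lemma fiber_sum a b c :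
  \sum_(tau | (partition tau D && (refines sigma tau && refines tau pi))
              && (blocksD tau X == rho))
    mu_weight a b sigma tau * mu_weight b c tau pi
  = mu_weight a b sigma' rho * mu_weight b c rho pi' * mu_step a c (nblocks_in sigma' Z).
Proof.
rewrite (eq_bigl (mem fiber)) => [|tau]; last exact: in_fiber.
rewrite big_setU1 ?tau_new_notin_join //= big_imset /=; last exact: tau_join_inj.
rewrite mu_weight_sigma_tau_new mu_weight_tau_new_pi (eq_bigr (fun C =>
  mu_weight a b sigma' rho * mu_weight b c rho pi' * mu_step a b (nblocks_in sigma' C))).
  rewrite mulrA -big_distrr -mulrDr addrC nblocks_in_Z -(sum_mu_step a b c) //.
  by move=> C; rewrite inE => /andP[/nblocks_in_rho_gt0].
move=> C; rewrite inE => /andP[C_rho CZ].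
by rewrite mu_weight_sigma_tau_join // mu_weight_tau_join_pi // mulrAC.
Qed.

End Fiber.

Lemma mu_mul_step a b c :
  \sum_(rho | partition rho (D :\: X)) mu a b sigma' rho * mu b c rho pi' = mu a c sigma' pi' ->
  refines sigma pi ->
  \sum_(tau | partition tau D) mu a b sigma tau * mu b c tau pi = mu a c sigma pi.
Proof.
move=> IH s_pi; have s_pi' : refines sigma' pi' by exact: refines_blocksD.
rewrite mu_mul_sum_interval !muE s_pi' in IH.
rewrite mu_mul_sum_interval !muE s_pi mu_weight_sigma_pi -IH big_distrl /=.
rewrite (partition_big (fun tau => blocksD tau X) (fun rho => partition rho (D :\: X) &&
  (refines sigma' rho && refines rho pi'))) /=; last first.
  by move=> tau /andP[p_tau /andP[s_tau tau_pi]]; rewrite partition_blocksD ?refines_blocksD.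
by apply: eq_bigr => rho /andP[p_rho /andP[s_rho rho_pi]]; apply: fiber_sum.
Qed.

End InductionStep.

Local Open Scope ring_scope.

Lemma mu_mul_partition (R : comRingType) (T : finType) (a b c : R) (D : {set T})
    (sigma pi : {set {set T}}) :
  partition sigma D -> partition pi D -> refines sigma pi ->
  \sum_(tau | partition tau D) mu a b sigma tau * mu b c tau pi = mu a c sigma pi.
Proof.
move: {2}#|sigma| (erefl #|sigma|) => n.
elim: n D sigma pi => [|n IH] D sigma pi card_sigma p_sigma p_pi s_pi.
  move/eqP: card_sigma; rewrite cards_eq0 => /eqP sigma0.
  have D0 : D = set0 by case/and3P: p_sigma => /eqP <- _ _; rewrite sigma0 /cover big_set0.
  move: p_pi; rewrite D0 partition_set0 => /eqP pi0.
  rewrite (eq_bigl (pred1 set0)) => [|tau]; last by rewrite partition_set0.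
  have refines00 : refines (set0 : {set {set T}}) set0 by apply/refinesP => B; rewrite inE.
  by rewrite big_pred1_eq sigma0 pi0 !muE refines00 /mu_weight !big_set0 mulr1.
have [X X_sigma] : exists X, X \in sigma by apply/set0Pn; rewrite -card_gt0 card_sigma.
have [Y Y_pi XY] := refines_block s_pi X_sigma.
apply: (mu_mul_step p_sigma p_pi X_sigma Y_pi XY) => //.
apply: IH; [|exact: partition_blocksD|exact: partition_blocksD|exact: refines_blocksD].
case/and3P: p_sigma => _ t_sigma n_sigma.
by move: card_sigma; rewrite blocksD_block // (cardsD1 X) X_sigma => -[].
Qed.

Theorem theoremA1 (R : comRingType) (T : finType) (q1 q2 q3 : R)
    (sigma pi : {set {set T}}) :
  is_partition sigma -> is_partition pi ->
  \sum_(tau : {set {set T}} | is_partition tau)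
     mu q1 q2 sigma tau * mu q2 q3 tau pi
  = mu q1 q3 sigma pi.
Proof.
move=> p_sigma p_pi; have [s_pi|ns_pi] := boolP (refines sigma pi).
  exact: mu_mul_partition p_sigma p_pi s_pi.
rewrite muE (negbTE ns_pi) big1 // => tau _; rewrite !muE.
case s_tau: (refines sigma tau); last by rewrite mul0r.
case tau_pi: (refines tau pi); last by rewrite mulr0.
by move: ns_pi; rewrite (refines_trans s_tau tau_pi).
Qed.
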